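(* Let $G$ and $H$ be graphs with at least two vertices each, with $V(G)\cap V(H)=\emptyset$, and let $K$ be a clique of $G$. Let $\{u_1,u_2\}$ be a top-two of $H$, and suppose there exists an acyclic digraph $D'$ with vertex set $V(G)\cup\{u_1,u_2\}$ such that $C(D')$ is $G$ together with $u_1,u_2$ as isolated vertices. If either $H$ has no edges or $H$ has no isolated vertices, then there exists an acyclic digraph $D$ such that (i) $C(D)=(G\ltimes_K H)\cup I_2$ if $H$ has no edges, and $C(D)=(G\ltimes_K H)\cup I_{k(H)}$ if $H$ has no isolated vertices; and (ii) $D$ has an acyclic ordering whose first $|V(G)|+2$ terms induce the digraph $D'$.
   Context: All graphs are finite and simple. For a digraph $D$, its competition graph $C(D)$ is the graph with vertex set $V(D)$ in which two distinct vertices $u,v$ are adjacent iff there is a vertex $x$ with arcs $(u,x),(v,x)\in A(D)$. The competition number $k(G)$ is the smallest nonnegative integer $k$ such that $G$ together with $k$ new isolated vertices is the competition graph of an acyclic digraph. $I_k$ is the edgeless graph on $k$ vertices; $X\cup I_k$ denotes the disjoint union of $X$ with $k$ new isolated vertices. An acyclic ordering of a digraph $D$ is an ordering of its vertices such that every arc goes from an earlier to a later vertex. A clique is a set of pairwise adjacent vertices (the empty set counts). For vertex-disjoint graphs $G,H$ and a clique $K$ of $G$, $G\ltimes_K H$ is the graph with vertex set $V(G)\cup V(H)$ and edge set $E(G)\cup E(H)\cup\{uv: u\in K, v\in V(H)\}$. For a graph $H$, a set $\{u,v\}$ of two distinct vertices is a top-two of $H$ if there exists an acyclic digraph $D$ with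 $C(D)=H\cup I_{k(H)}$ having an acyclic ordering whose first and second vertices are $u$ and $v$. *)

From HB Require Import structures.
From mathcomp Require Import all_boot all_order finmap.
Set Implicit Arguments. Unset Strict Implicit. Unset Printing Implicit Defensive.
Local Open Scope fset_scope.

(* A (finite simple) graph: a finite vertex set of labels and a raw edge
   relation; the graph it denotes has adjacency [adj] (symmetrised,
   loops removed, restricted to the vertex set). Every finite simple graph
   arises this way (up to relabelling). *)
Record graph := Graph { gV : {fset nat}; gE : rel nat }.

Definition adj (G : graph) (u v : nat) : bool :=
  [&& u \in gV G, v \in gV G, u != v & gE G u v || gE G v u].

Record digraph := Digraph { dV : {fset nat}; dA : rel nat }.

Definition arc (D : digraph) (u v : nat) : bool :=
  [&& u \in dV D, v \in dV D & dA D u v].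

(* acyclic = no directed cycle (loops are cycles of length 1) *)
Definition acyclic (D : digraph) : Prop :=
  forall (x : nat) (p : seq nat), path (arc D) x p -> last x p = x -> p = [::].

Definition cadj (D : digraph) (u v : nat) : Prop :=
  [/\ u \in dV D, v \in dV D, u != v & exists x, arc D u x && arc D v x].

Definition comp_is (D : digraph) (X : graph) (k : nat) : Prop :=
  exists Z : {fset nat},
    [/\ [disjoint gV X & Z], #|` Z| = k, dV D = gV X `|` Z &
        forall u v, cadj D u v <-> adj X u v].

Definition acyc_ord (D : digraph) (s : seq nat) : Prop :=
  [/\ uniq s, forall x, (x \in s) = (x \in dV D) &
      forall u v, arc D u v -> index u s < index v s].

Definition compable (X : graph) (k : nat) : Prop :=
  exists D, acyclic D /\ comp_is D X k.

Definition is_compnum (X : graph) (k : nat) : Prop :=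
  compable X k /\ forall k', compable X k' -> k <= k'.

Definition top_two (X : graph) (u v : nat) : Prop :=
  u != v /\ exists k, is_compnum X k /\
    exists D s, [/\ acyclic D, comp_is D X k, acyc_ord D s &
                    take 2 s = [:: u; v] \/ take 2 s = [:: v; u]].

Definition is_clique (G : graph) (K : {fset nat}) : Prop :=
  K `<=` gV G /\ forall u v, u \in K -> v \in K -> u != v -> adj G u v.

Definition semijoin (G : graph) (K : {fset nat}) (H : graph) : graph :=
  Graph (gV G `|` gV H)
    (fun a b => [|| adj G a b, adj H a b,
                   (a \in K) && (b \in gV H) | (b \in K) && (a \in gV H)]).

Definition edgeless (X : graph) : Prop := forall u v, ~~ adj X u v.
Definition no_isolated (X : graph) : Prop :=
  forall u, u \in gV X -> exists v, adj X u v.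

Definition prefix_induces (D : digraph) (s : seq nat) (n : nat) (D' : digraph) : Prop :=
  (forall x, (x \in take n s) = (x \in dV D')) /\
  (forall a b, a \in take n s -> b \in take n s -> arc D a b = arc D' a b).

From Pilot Require (* [path] also defines [arc]; re-importing makes [arc] the digraph arc relation. *)
Import Defs.
From mathcomp Require Import all_boot all_order finmap zify.
Set Implicit Arguments. Unset Strict Implicit. Unset Printing Implicit Defensive.
Import Defs.
Local Open Scope fset_scope.

(* Take an acyclic ordering of D' and a witness of the top-two {u1, u2}: an
   acyclic digraph DH with C(DH) = H ∪ I_k whose acyclic ordering starts with
   u1, u2.  Append the remaining vertices of DH after those of D' (relabelling
   the isolated vertices of DH away from V(G)), keep the arcs of DH leaving
   vertices of H, and let every vertex of K prey on all appended vertices.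
   A common prey of two distinct vertices never occupies one of the first two
   places of an acyclic ordering, so every edge of H is still realised by an
   appended prey; and a vertex of K competes with a vertex v of H as soon as v
   has a prey among the appended vertices.  When H has no isolated vertex this
   holds because v has a neighbour.  When H is edgeless, k(H) = 0 and DH is
   replaced by the digraph on V(H) and two new vertices in which each vertex
   preys on the vertex two places later in the ordering, whose competition
   graph is H ∪ I_2. *)

Lemma fset_nat_bound (A : {fset nat}) : exists M, forall x, x \in A -> x < M.
Proof.
exists (\max_(x <- enum_fset A) x).+1 => x Ax.
by rewrite ltnS; apply: (leq_bigmax_seq (F := id) x).
Qed.

Lemma acyc_ord_acyclic D s : acyc_ord D s -> acyclic D.
Proof.
case=> _ _ arc_lt x p.
suff index_last y q : path (arc D) y q -> q != [::] -> index y s < index (last y q) s.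
  move=> xp px; apply/eqP/negPn/negP => /(index_last _ _ xp).
  by rewrite px ltnn.
elim: q y => // z q IHq y /= /andP[yz zq] _.
case: q IHq zq => [|w q] IHq zq; first exact: arc_lt.
exact: ltn_trans (arc_lt _ _ yz) (IHq _ zq isT).
Qed.

Lemma acyclic_acyc_ord D : acyclic D -> exists s, acyc_ord D s.
Proof.
move=> acD; have [M ltM] := fset_nat_bound (dV D).
pose e : rel 'I_M.+1 := fun i j => arc D i j.
pose rk x := #|[set i : 'I_M.+1 | connect e i (inord x)]|.
have rk_arc u v : arc D u v -> rk u < rk v.
  move=> uv; have /and3P[Du Dv _] := uv.
  have inordK' x : x \in dV D -> nat_of_ord (inord x : 'I_M.+1) = x.
    by move=> Dx; rewrite inordK // ltnS ltnW // ltM.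
  have e_uv : e (inord u) (inord v) by rewrite /e !inordK'.
  apply: proper_card; apply/properP; split.
    by apply/subsetP => i; rewrite !inE => iu; apply: connect_trans iu (connect1 e_uv).
  exists (inord v); first by rewrite inE connect0.
  (* a path from v back to u would close a cycle through the arc uv *)
  rewrite inE; apply/negP => /connectP[p vp up].
  have cyc : path e (inord v) (rcons p (inord v)) by rewrite rcons_path vp -up.
  have := acD (val (inord v : 'I_M.+1)) (map val (rcons p (inord v))).
  rewrite path_map last_map last_rcons.
  by move=> /(_ cyc erefl); case: p {vp up cyc}.
pose leT x y := rk x <= rk y.
have leT_total : total leT by move=> x y; apply: leq_total.
have leT_trans : transitive leT by move=> x y z; apply: leq_trans.
set s := sort leT (enum_fset (dV D)).
have s_sorted : sorted leT s := sort_sorted leT_total _.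
exists s; split=> [|x|u v uv]; first by rewrite sort_uniq fset_uniq.
  by rewrite mem_sort.
have /and3P[Du Dv _] := uv; have rk_uv := rk_arc _ _ uv.
have [su sv] : u \in s /\ v \in s by rewrite !mem_sort.
rewrite ltnNge leq_eqVlt; apply/negP => /orP[/eqP vu | vu].
  by move: rk_uv; rewrite -(nth_index 0 su) -vu nth_index // ltnn.
by move: (sorted_ltn_index leT_trans s_sorted v u sv su vu); rewrite /leT leqNgt rk_uv.
Qed.

Lemma acyc_ord_size D s : acyc_ord D s -> size s = #|` dV D|.
Proof. by case=> s_uniq sD _; apply/perm_size/uniq_perm; rewrite ?fset_uniq. Qed.

Lemma comp_is_card D X k : comp_is D X k -> #|` dV D| = (#|` gV X| + k)%N.
Proof. by case=> Z [XZ <- -> _]; rewrite cardfsU (disjoint_fsetI0 XZ) cardfs0 subn0. Qed.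

Lemma comp_is_disjoint D X k B :
  comp_is D X k -> dV D = gV X `|` B -> #|` B| <= k -> [disjoint gV X & B].
Proof.
move=> /comp_is_card cardD VD leBk; rewrite -fsetI_eq0 -cardfs_eq0.
have := fsubset_leq_card (fsubsetIr (gV X) B).
by move: cardD; rewrite VD cardfsU; lia.
Qed.

Lemma adj_sym X u v : adj X u v = adj X v u.
Proof. by rewrite /adj eq_sym orbC; case: (u \in gV X); case: (v \in gV X). Qed.

Lemma adj_semijoin G K H u v : K `<=` gV G -> [disjoint gV G & gV H] ->
  adj (semijoin G K H) u v =
  [|| adj G u v, adj H u v, (u \in K) && (v \in gV H) | (v \in K) && (u \in gV H)].
Proof.
move=> /fsubsetP KG /fdisjointP GH.
apply/idP/idP => [/and4P[_ _ _] | uv].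
  by rewrite /= (adj_sym G v) (adj_sym H v) => /orP[] /or4P[] ->; rewrite ?orbT.
have neq x y : x \in gV G -> y \in gV H -> x != y.
  by move=> Gx Hy; apply: contraTneq Hy => <-; apply: GH.
have [Vu Vv neq_uv] : [/\ u \in gV G `|` gV H, v \in gV G `|` gV H & u != v].
  rewrite !in_fsetU; case/or4P: (uv) => [/and4P[-> -> -> _] | /and4P[-> -> -> _] |
    /andP[/KG Gu Hv] | /andP[/KG Gv Hu]]; rewrite ?orbT //.
  - by rewrite Gu Hv orbT neq.
  - by rewrite Gv Hu orbT eq_sym neq.
rewrite {1}/adj Vu Vv neq_uv /=.
by case/or4P: uv => ->; rewrite ?orbT.
Qed.

Definition relabel (f g : nat -> nat) (D : digraph) : digraph :=
  Digraph (f @` dV D) (fun x y => dA D (g x) (g y)).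

Section Relabel.

Variables (f g : nat -> nat) (D : digraph).
Hypothesis fK : cancel f g.

Let f_inj : injective f := can_inj fK.

Lemma relabel_arc u v : arc (relabel f g D) (f u) (f v) = arc D u v.
Proof. by rewrite /arc /= !(mem_imfset _ _ f_inj) !fK. Qed.

Lemma relabel_arcP x y :
  arc (relabel f g D) x y -> exists u v, [/\ x = f u, y = f v & arc D u v].
Proof.
move=> xy; have /and3P[/imfsetP[u _ xu] /imfsetP[v _ yv] _] := xy.
by exists u, v; rewrite -relabel_arc -xu -yv.
Qed.

Lemma relabel_cadj u v : cadj (relabel f g D) (f u) (f v) <-> cadj D u v.
Proof.
rewrite /cadj /= !(mem_imfset _ _ f_inj) (inj_eq f_inj).
split=> -[Du Dv uv [x /andP[ux vx]]]; split=> //; last first.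
  by exists (f x); rewrite !relabel_arc ux vx.
move: ux vx => /relabel_arcP[_ [y [/f_inj <- -> uy]]].
by move=> /relabel_arcP[_ [_ [/f_inj <- /f_inj <- vy]]]; exists y; rewrite uy vy.
Qed.

Lemma relabel_acyc_ord s : acyc_ord D s -> acyc_ord (relabel f g D) (map f s).
Proof.
case=> s_uniq sD arc_lt; split=> [|x|x y].
- by rewrite map_inj_uniq.
- apply/mapP/imfsetP => -[u us ->]; by exists u; rewrite ?sD // -sD.
- by case/relabel_arcP=> u [v [-> -> /arc_lt]]; rewrite !index_map.
Qed.

Lemma relabel_comp_is X k :
  {in gV X, f =1 id} -> comp_is D X k -> comp_is (relabel f g D) X k.
Proof.
move=> fX [Z [XZ cardZ VD cadjD]]; exists (f @` Z); split.
- apply/fdisjointP => x Xx; apply/imfsetP => -[z Zz xz].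
  have zx : z = x by apply: f_inj; rewrite -xz fX.
  by move/fdisjointP: XZ => /(_ _ Xx); rewrite -zx Zz.
- by rewrite card_imfset.
- rewrite /= VD imfsetU; congr (_ `|` _); apply/fsetP => x.
  by apply/imfsetP/idP => [[y Xy ->]|Xx]; [rewrite fX | exists x; rewrite ?fX].
- move=> u v; split=> [uv | /[dup] uv /and4P[Xu Xv _ _]].
    move: uv => /[dup] -[/imfsetP[u' _ ->] /imfsetP[v' _ ->] _ _].
    by move/relabel_cadj/cadjD => /[dup] /and4P[Xu Xv _ _]; rewrite !fX.
  by rewrite -(fX _ Xu) -(fX _ Xv) relabel_cadj cadjD.
Qed.

End Relabel.

Lemma fresh_relabelling (P A : {fset nat}) : [disjoint A & P] ->
  exists f g, [/\ cancel f g, {in P, f =1 id} & forall x, f x \notin A].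
Proof.
move=> /fdisjointP AP; have [M ltM] := fset_nat_bound (A `|` P).
pose f x := if x \in P then x else (x + M)%N.
pose g y := if y \in P then y else (y - M)%N.
have fresh x : (x + M)%N \notin A `|` P.
  by apply: contraTN isT => /ltM; rewrite ltnNge leq_addl.
exists f, g; split=> [x | x Px | x]; rewrite /f /g.
- case: (boolP (x \in P)) => [Px|_]; first by rewrite Px.
  by move: (fresh x); rewrite in_fsetU negb_or => /andP[_ /negbTE ->]; rewrite addnK.
- by rewrite Px.
- case: ifP => [Px|_]; last by move: (fresh x); rewrite in_fsetU negb_or => /andP[].
  by apply: contraTN Px => /AP.
Qed.

Definition top_two_prey (H : graph) (k a b : nat) (DH : digraph) (r : seq nat) :=
  [/\ comp_is DH H k, acyc_ord DH [:: a, b & r] &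
      forall v, v \in gV H -> exists2 y, y \in r & arc DH v y].

Lemma acyc_ord_common_prey D a b r u v y : acyc_ord D [:: a, b & r] ->
  u != v -> arc D u y -> arc D v y -> y \in r.
Proof.
case=> s_uniq sD arc_lt neq_uv uy vy.
have /and3P[_ Dy _] := uy; rewrite -sD !inE in Dy.
case/or3P: Dy => [/eqP ya | /eqP yb | //].
  by move: (arc_lt _ _ uy); rewrite ya /= eqxx.
have ab : a != b by move: s_uniq; rewrite /= inE negb_or => /andP[/andP[]].
have first_a w : arc D w y -> w = a.
  move=> /arc_lt; rewrite yb /= eq_sym (negbTE ab) eqxx.
  by case: (w =P a).
by move: neq_uv; rewrite (first_a _ uy) (first_a _ vy) eqxx.
Qed.

Lemma no_isolated_top_two_prey H k DH a b r : no_isolated H ->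
  comp_is DH H k -> acyc_ord DH [:: a, b & r] -> top_two_prey H k a b DH r.
Proof.
move=> noiso cDH oDH; split=> // v Hv.
have [w vw] := noiso v Hv.
have [_ [_ _ _ cadjDH]] := cDH.
have [_ _ neq_vw [y /andP[vy wy]]] := proj2 (cadjDH v w) vw.
by exists y; first exact: acyc_ord_common_prey oDH neq_vw vy wy.
Qed.

Lemma relabel_top_two_prey f g H k DH a b r : cancel f g ->
  {in gV H `|` [fset a; b], f =1 id} -> top_two_prey H k a b DH r ->
  top_two_prey H k a b (relabel f g DH) (map f r).
Proof.
move=> fK fP [cDH oDH prey].
have fH : {in gV H, f =1 id} by move=> x Hx; rewrite fP // in_fsetU Hx.
have [fa fb] : f a = a /\ f b = b by rewrite !fP // !inE eqxx ?orbT.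
split; first exact: relabel_comp_is.
  by rewrite -{1}fa -{1}fb; apply: (relabel_acyc_ord fK oDH).
move=> v Hv; have [y ry vy] := prey v Hv.
by exists (f y); rewrite ?map_f // -{1}(fH _ Hv) relabel_arc.
Qed.

Definition shift2_digraph (s : seq nat) : digraph :=
  Digraph [fset x in s] (fun x y => index y s == (index x s).+2).

Section Shift2.

Variable s : seq nat.
Hypothesis s_uniq : uniq s.

Lemma shift2_arc x y :
  arc (shift2_digraph s) x y = [&& x \in s, y \in s & index y s == (index x s).+2].
Proof. by rewrite /arc /= !inE. Qed.

Lemma shift2_acyc_ord : acyc_ord (shift2_digraph s) s.
Proof.
split=> // [x|x y]; first by rewrite /= inE.
by rewrite shift2_arc => /and3P[_ _ /eqP ->]; apply: ltnW.
Qed.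

Lemma shift2_cadj u v : ~ cadj (shift2_digraph s) u v.
Proof.
case=> _ _ neq_uv [x]; rewrite !shift2_arc.
case/andP=> /and3P[us _ /eqP ux] /and3P[vs _ /eqP vx].
have /(index_inj 0 us vs) uv : index u s = index v s.
  by apply/succn_inj/succn_inj; rewrite -ux.
by rewrite uv eqxx in neq_uv.
Qed.

Lemma shift2_prey i : i.+2 < size s -> arc (shift2_digraph s) (nth 0 s i) (nth 0 s i.+2).
Proof.
move=> lt_i2; have lt_i : i < size s by rewrite ltnW // ltnW.
by rewrite shift2_arc !mem_nth //= !index_uniq.
Qed.

End Shift2.

Lemma edgeless_top_two_prey H a b : edgeless H -> a != b ->
  a \in gV H -> b \in gV H -> exists DH r, top_two_prey H 2 a b DH r.
Proof.
move=> noedge ab Ha Hb; have [M ltM] := fset_nat_bound (gV H).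
set rest := [seq x <- enum_fset (gV H) | x \notin [:: a; b]].
set hs := [:: a, b & rest]; set r := rest ++ [:: M; M.+1]; set s := hs ++ [:: M; M.+1].
have HM : M \notin gV H by apply/negP => /ltM; rewrite ltnn.
have HM1 : M.+1 \notin gV H by apply/negP => /ltM; rewrite ltnNge leqnSn.
have hsH x : (x \in hs) = (x \in gV H).
  rewrite !inE mem_filter !inE.
  by case: eqP => [->|_] /=; [rewrite Ha | case: eqP => [->|_] /=; rewrite ?Hb].
have s_uniq : uniq s.
  rewrite cat_uniq /= !hsH (negbTE HM) (negbTE HM1) !inE (negbTE ab) (ltn_eqF (ltnSn M)).
  by rewrite !mem_filter !inE !eqxx ?orbT filter_uniq ?fset_uniq.
exists (shift2_digraph s), r; split; last first.
- move=> v Hv; have vs : v \in s by rewrite /s mem_cat hsH Hv.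
  have lt_i : index v s < size hs by rewrite /s index_cat hsH Hv index_mem hsH.
  exists (nth 0 r (index v s)); first by rewrite mem_nth // size_cat addn2.
  rewrite -{1}(nth_index 0 vs); apply: (shift2_prey s_uniq).
  by rewrite size_cat addn2.
- exact: shift2_acyc_ord.
exists [fset M; M.+1]; split.
- apply/fdisjointP => x Hx; rewrite !inE; apply/norP.
  by split; apply/eqP => xM; [move: HM | move: HM1]; rewrite -xM Hx.
- by rewrite cardfs2 (ltn_eqF (ltnSn M)).
- by apply/fsetP => x; rewrite in_fsetU in_fset2 /= in_fset /s mem_cat hsH !inE.
- by move=> u v; split=> [/shift2_cadj [] | uv]; move: (noedge u v); rewrite uv.
Qed.

Lemma common_prey_cadj D u v x : u != v -> arc D u x -> arc D v x -> cadj D u v.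
Proof.
move=> neq_uv ux vx; have /and3P[Du _ _] := ux; have /and3P[Dv _ _] := vx.
by split=> //; exists x; rewrite ux vx.
Qed.

Definition semijoin_digraph (D' DH : digraph) (K : {fset nat}) (H : graph) : digraph :=
  Digraph (dV D' `|` dV DH) (fun x y =>
    arc D' x y || (y \in dV DH `\` dV D') && ((x \in K) || (x \in gV H) && arc DH x y)).

Section SemijoinExtension.

Variables (G H : graph) (K : {fset nat}) (D' DH : digraph) (s' r : seq nat) (a b k : nat).
Hypotheses (cliqueK : is_clique G K) (GDH : [disjoint gV G & dV DH])
  (oD' : acyc_ord D' s') (VD' : dV D' = gV G `|` [fset a; b])
  (cadjD' : forall u v, cadj D' u v <-> adj G u v)
  (preyDH : top_two_prey H k a b DH r).

Local Notation D := (semijoin_digraph D' DH K H).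

Let cDH : comp_is DH H k. Proof. by case: preyDH. Qed.
Let oDH : acyc_ord DH [:: a, b & r]. Proof. by case: preyDH. Qed.

Let KD' : K `<=` dV D'.
Proof. by rewrite VD'; apply: fsubset_trans (fsubsetUl _ _); case: cliqueK. Qed.

Let ab_r_uniq : [/\ a != b, a \notin r, b \notin r & uniq r].
Proof.
by case: oDH => /= /andP[]; rewrite inE negb_or => /andP[-> ->] /andP[-> ->].
Qed.

Let memDH x : (x \in dV DH) = [|| x == a, x == b | x \in r].
Proof. by case: oDH => _ <- _; rewrite !inE. Qed.

Let index_r x : x \in r -> index x [:: a, b & r] = (index x r).+2.
Proof.
have [_ ar br _] := ab_r_uniq => xr /=.
have [-> ->] : (a == x) = false /\ (b == x) = false.
  by split; apply: contraTF xr => /eqP <-.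
by [].
Qed.

Let HDH : gV H `<=` dV DH.
Proof. by have [ZH [_ _ -> _]] := cDH; apply: fsubsetUl. Qed.

Let GH : [disjoint gV G & gV H].
Proof. exact: fdisjointWr HDH GDH. Qed.

Lemma semijoin_new_vertex x : (x \in dV DH `\` dV D') = (x \in r).
Proof.
have [ab ar br _] := ab_r_uniq.
rewrite in_fsetD memDH VD' in_fsetU in_fset2.
case: (boolP (x \in r)) => [xr | _].
  2: by rewrite orbF; case: (x == a); case: (x == b); rewrite ?orbT ?andbF.
have DHx : x \in dV DH by rewrite memDH xr !orbT.
have [-> ->] : (x == a) = false /\ (x == b) = false.
  by split; apply: contraTF xr => /eqP ->.
by have /negbTE -> := fdisjointP_sym GDH x DHx.
Qed.

Let new_notin x : x \in r -> x \notin dV D'.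
Proof. by rewrite -semijoin_new_vertex in_fsetD => /andP[]. Qed.

Lemma semijoin_arc x y :
  arc D x y = arc D' x y || (y \in r) && ((x \in K) || (x \in gV H) && arc DH x y).
Proof.
rewrite -semijoin_new_vertex {1}/arc /= !in_fsetU.
apply/idP/idP => [/and3P[] // | xy]; rewrite xy andbT.
case/orP: xy => [/and3P[-> -> _] // | /andP[]]; rewrite in_fsetD => /andP[_ ->].
by case/orP=> [/(fsubsetP KD') -> | /andP[_ /and3P[-> _ _]]]; rewrite ?orbT.
Qed.

Lemma semijoin_acyc_ord : acyc_ord D (s' ++ r).
Proof.
have [_ _ _ r_uniq] := ab_r_uniq; case: oD' => s'_uniq s'D' arc_lt'.
have [_ _ arc_ltH] := oDH.
split=> [|x|u v].
- rewrite cat_uniq s'_uniq r_uniq andbT; apply/hasPn => x /new_notin.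
  by rewrite s'D'.
- rewrite mem_cat s'D' /= in_fsetU -semijoin_new_vertex in_fsetD.
  by case: (x \in dV D').
rewrite semijoin_arc !index_cat !s'D' => /orP[uv | /andP[vr pred_u]].
  by have /and3P[-> -> _] := uv; apply: arc_lt'.
rewrite (negbTE (new_notin vr)); case: ifP => [us | uD'].
  by rewrite ltn_addr // index_mem s'D'.
have [uK | /andP[_ uv]] := orP pred_u; first by rewrite (fsubsetP KD') in uD'.
have ur : u \in r.
  by rewrite -semijoin_new_vertex in_fsetD uD'; case/and3P: uv.
by rewrite ltn_add2l -ltnS -ltnS -!index_r // arc_ltH.
Qed.

Lemma semijoin_prefix : prefix_induces D (s' ++ r) (size s') D'.
Proof.
have [_ s'D' _] := oD'.
split=> [x | x y]; rewrite take_size_cat ?s'D' // => _ D'y.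
have /negbTE yr : y \notin r by apply: contraTN D'y => /new_notin.
by rewrite semijoin_arc yr orbF.
Qed.

Lemma semijoin_cadj u v : cadj D u v <-> adj (semijoin G K H) u v.
Proof.
have [KG cliqueGK] := cliqueK; have [_ _ preyH] := preyDH.
have [ZH [_ _ _ cadjDH]] := cDH.
split=> [[_ _ neq_uv [x /andP[]]] | /[dup] /and4P[_ _ neq_uv _]]; rewrite adj_semijoin //.
  rewrite !semijoin_arc => /orP[ux | /andP[xr pu]] /orP[vx | /andP[xr' pv]].
  - by apply/orP; left; apply/cadjD'; apply: common_prey_cadj ux vx.
  - by move: (new_notin xr'); case/and3P: ux => _ ->.
  - by move: (new_notin xr); case/and3P: vx => _ ->.
  case/orP: pu => [uK | /andP[Hu ux]]; case/orP: pv => [vK | /andP[Hv vx]].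
  - by rewrite cliqueGK.
  - by rewrite uK Hv !orbT.
  - by rewrite vK Hu !orbT.
  - by rewrite (proj1 (cadjDH u v)) ?orbT //; apply: common_prey_cadj ux vx.
case/or4P => [/cadjD'[_ _ _ [x /andP[ux vx]]] | uv | /andP[uK Hv] | /andP[vK Hu]].
- by apply: (@common_prey_cadj _ _ _ x neq_uv); rewrite semijoin_arc ?ux ?vx.
- have [_ _ _ [y /andP[uy vy]]] := proj2 (cadjDH u v) uv.
  have yr := acyc_ord_common_prey oDH neq_uv uy vy.
  have /and4P[Hu Hv _ _] := uv.
  by apply: (@common_prey_cadj _ _ _ y neq_uv);
    rewrite semijoin_arc yr ?Hu ?Hv ?uy ?vy !orbT.
- have [y yr vy] := preyH v Hv.
  by apply: (@common_prey_cadj _ _ _ y neq_uv); rewrite semijoin_arc yr ?uK ?Hv ?vy !orbT.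
- have [y yr uy] := preyH u Hu.
  by apply: (@common_prey_cadj _ _ _ y neq_uv); rewrite semijoin_arc yr ?vK ?Hu ?uy !orbT.
Qed.

Lemma semijoin_comp_is : comp_is D (semijoin G K H) k.
Proof.
have [ZH [HZ cardZ VDH _]] := cDH.
have abDH : [fset a; b] `<=` dV DH.
  by apply/fsubsetP => x; rewrite in_fset2 memDH => /orP[] ->; rewrite ?orbT.
exists ZH; split=> //; last exact: semijoin_cadj.
- apply/fdisjointP => x; rewrite /= in_fsetU => /orP[Gx | Hx].
    2: exact: (fdisjointP HZ).
  by apply: contraNN (fdisjointP GDH x Gx); rewrite VDH in_fsetU => ->; rewrite orbT.
- by rewrite /= VD' -fsetUA (fsetUidPr _ _ abDH) VDH fsetUA.
Qed.

End SemijoinExtension.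

Lemma semijoin_extension G H K D' DH a b r k :
  is_clique G K -> acyclic D' -> dV D' = gV G `|` [fset a; b] -> comp_is D' G 2 ->
  [disjoint gV G & gV H `|` [fset a; b]] -> top_two_prey H k a b DH r ->
  exists D s, [/\ acyclic D, comp_is D (semijoin G K H) k, acyc_ord D s &
                  prefix_induces D s (#|` gV G| + 2) D'].
Proof.
move=> cliqueK acD' VD' cD' GP prey.
have [s' oD'] := acyclic_acyc_ord acD'.
have [f [g [fK fP fG]]] := fresh_relabelling GP.
have prey' := relabel_top_two_prey fK fP prey.
have GDH : [disjoint gV G & dV (relabel f g DH)].
  by apply/fdisjointP_sym => _ /imfsetP[x _ ->]; apply: fG.
have cadjD' : forall u v, cadj D' u v <-> adj G u v by case: cD' => Z [].
have oD := semijoin_acyc_ord cliqueK GDH oD' VD' prey'.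
exists (semijoin_digraph D' (relabel f g DH) K H), (s' ++ map f r); split=> //.
- exact: acyc_ord_acyclic oD.
- exact: semijoin_comp_is cliqueK GDH VD' cadjD' prey'.
- rewrite -(comp_is_card cD') -(acyc_ord_size oD').
  exact: semijoin_prefix cliqueK GDH oD' VD' prey'.
Qed.

Lemma top_two_ord H u1 u2 : top_two H u1 u2 ->
  exists k a b DH r, [/\ is_compnum H k, comp_is DH H k, acyc_ord DH [:: a, b & r],
                         a != b & [fset a; b] = [fset u1; u2]].
Proof.
case=> u12 [k [ck [DH [[|a [|b r]] [_ cDH oDH /= first2]]]]]; try by case: first2.
exists k, a, b, DH, r; move: u12; case: first2 => -[<- <-] ab; split=> //.
  by rewrite eq_sym.
by rewrite fsetUC.
Qed.

Lemma compnum_unique X k k' : is_compnum X k -> is_compnum X k' -> k = k'.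
Proof. by move=> [ck mink] [ck' mink']; apply/eqP; rewrite eqn_leq mink // mink'. Qed.

Lemma edgeless_compnum X k : edgeless X -> is_compnum X k -> k = 0.
Proof.
move=> noedge [_ mink]; apply/eqP; rewrite -leqn0; apply: mink.
exists (Digraph (gV X) (fun _ _ => false)); split.
  by move=> x [|y p] //=; rewrite /arc /= !andbF.
exists fset0; split; rewrite ?fdisjointX0 ?cardfs0 ?fsetU0 // => u v.
by split=> [[_ _ _ [x]] | uv]; [rewrite /arc /= !andbF | move: (noedge u v); rewrite uv].
Qed.

Lemma comp_is0_vertices D X : comp_is D X 0 -> dV D = gV X.
Proof. by case=> Z [_ /cardfs0_eq -> -> _]; rewrite fsetU0. Qed.

Lemma edgeless_no_isolated X : 0 < #|` gV X| -> edgeless X -> ~ no_isolated X.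
Proof.
rewrite cardfs_gt0 => /fset0Pn[x Xx] noedge /(_ x Xx)[y xy].
by move: (noedge x y); rewrite xy.
Qed.

Theorem proposition2p5 (G H : graph) (K : {fset nat}) (u1 u2 : nat) (D' : digraph) :
  2 <= #|` gV G| -> 2 <= #|` gV H| -> [disjoint gV G & gV H] ->
  is_clique G K ->
  top_two H u1 u2 ->
  acyclic D' -> dV D' = gV G `|` [fset u1; u2] -> comp_is D' G 2 ->
  edgeless H \/ no_isolated H ->
  exists (D : digraph) (s : seq nat),
    [/\ acyclic D,
        edgeless H -> comp_is D (semijoin G K H) 2,
        no_isolated H -> forall k, is_compnum H k -> comp_is D (semijoin G K H) k,
        acyc_ord D s &
        prefix_induces D s (#|` gV G| + 2) D'].
Proof.
move=> _ H2 GH cliqueK /top_two_ord[k [a [b [DH [r [ck cDH oDH ab Eab]]]]]].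
move=> acD' VD' cD' Hcase.
rewrite -Eab in VD'.
have GP : [disjoint gV G & gV H `|` [fset a; b]].
  by rewrite fdisjointXU GH (comp_is_disjoint cD' VD') // cardfs2 ab.
have H0 : 0 < #|` gV H| by apply: leq_trans H2.
case: Hcase => [noedge | noiso].
- have [_ memDH _] := oDH.
  move: cDH; rewrite (edgeless_compnum noedge ck) => /comp_is0_vertices VDH.
  have [Ha Hb] : a \in gV H /\ b \in gV H by rewrite -VDH -!memDH !inE !eqxx ?orbT.
  have [DH1 [r1 prey1]] := edgeless_top_two_prey noedge ab Ha Hb.
  have [D [s [acD cD oD pD]]] := semijoin_extension cliqueK acD' VD' cD' GP prey1.
  by exists D, s; split=> // /(edgeless_no_isolated H0 noedge).
- have prey := no_isolated_top_two_prey noiso cDH oDH.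
  have [D [s [acD cD oD pD]]] := semijoin_extension cliqueK acD' VD' cD' GP prey.
  exists D, s; split=> // [noedge | _ k' ck'].
    by case: (edgeless_no_isolated H0 noedge).
  by rewrite (compnum_unique ck' ck).
Qed.
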